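(* Let $n\ge3$, $\beta=\frac n{n-2}$ and $\xi(x)=\prod_{i=0}^\infty\left(1+\frac{\beta^i}{\sqrt{2\beta^i-1}}x\right)^{\beta^{-i}}$. Then (i) $\xi(x)\le(1+x)^n$ for every $x\ge0$; (ii) $\xi(x)\le(4e)^{n/4}x^{n/2}$ for every $x\ge1$. *)

From Stdlib Require Import Reals.
Open Scope R_scope.

Definition beta (n : nat) : R := INR n / (INR n - 2).

Definition xi_factor (n i : nat) (x : R) : R :=
  Rpower (1 + (beta n ^ i / sqrt (2 * beta n ^ i - 1)) * x) (/ (beta n ^ i)).

Fixpoint xi_partial (n N : nat) (x : R) : R :=
  match N with
  | O => xi_factor n 0 x
  | S M => xi_partial n M x * xi_factor n (S M) x
  end.

Definition xi_is (n : nat) (x l : R) : Prop :=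
  Un_cv (fun N => xi_partial n N x) l.

(* The i-th factor is exp(log_factor i x) with log_factor i x = ln(1 + c_i x) / b_i,
   so the partial products are exp of partial sums of log_factor (xi_partial_exp).
   Since c_i >= 1, every log_factor is nonnegative: the partial products grow, and
   it suffices to bound the partial sums uniformly, the limit then existing and
   obeying the same bound (growing_bounded_limit).
   (i)  ln(1 + c x) <= c ln(1 + x) for c >= 1, and c_i / b_i <= beta^(-i/2), so the
        partial sums are at most ln(1 + x) * sum_i beta^(-i/2) <= n ln(1 + x), because
        beta^(-1/2) <= 1 - 1/n.
   (ii) For x >= 1, 1 + c x <= 2 c x and c_i^2 <= b_i, so log_factor i x is at most
        q^i (ln x + ln 2) + i q^i (ln beta)/2 with q = 1/beta = 1 - 2/n.  The geometric
        sums sum q^i <= n/2 and sum i q^i <= n(n-2)/4, together with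
        ln beta <= beta - 1 = 2/(n-2), give the bound (n/2) ln x + (n/4) ln(4e). *)
From Pilot Require Import Defs.
From Stdlib Require Import Reals Lra.
Open Scope R_scope.

Lemma exp_le_compat x y : x <= y -> exp x <= exp y.
Proof.
  intros [lt | ->]; [now left; apply exp_increasing | apply Rle_refl].
Qed.

Lemma ln_le_compat x y : 0 < x -> x <= y -> ln x <= ln y.
Proof.
  intros hx [lt | ->]; [now left; apply ln_increasing | apply Rle_refl].
Qed.

Lemma ln_nonneg y : 1 <= y -> 0 <= ln y.
Proof. intro hy; rewrite <- ln_1; apply ln_le_compat; lra. Qed.

Lemma ln_le_pred y : 0 < y -> ln y <= y - 1.
Proof. intro hy; pose proof (exp_ineq1_le (ln y)) as h; rewrite exp_ln in h; lra. Qed.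

(* Stretching the argument by c >= 1 multiplies ln(1 + x) by at most c:
   ln((1+cx)/(1+x)) <= (c-1) x/(1+x) <= (c-1) ln(1+x).  Key estimate for (i). *)
Lemma ln_1_plus_scaled c x : 1 <= c -> 0 <= x -> ln (1 + c * x) <= c * ln (1 + x).
Proof.
  intros hc hx.
  assert (hm : 0 < 1 + x) by lra.
  assert (hr : 0 < (1 + c * x) / (1 + x)) by (apply Rdiv_lt_0_compat; nra).
  assert (up : ln ((1 + c * x) / (1 + x)) <= (c - 1) * (x / (1 + x))).
  { replace ((c - 1) * (x / (1 + x))) with ((1 + c * x) / (1 + x) - 1) by (field; lra).
    now apply ln_le_pred. }
  assert (down : x / (1 + x) <= ln (1 + x)).
  { pose proof (ln_le_pred (/ (1 + x)) (Rinv_0_lt_compat _ hm)) as h.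
    rewrite ln_Rinv in h by lra.
    replace (/ (1 + x) - 1) with (- (x / (1 + x))) in h by (field; lra). lra. }
  unfold Rdiv in up; rewrite ln_mult, ln_Rinv in up by (try apply Rinv_0_lt_compat; nra).
  assert ((c - 1) * (x / (1 + x)) <= (c - 1) * ln (1 + x)) by (apply Rmult_le_compat_l; lra).
  unfold Rdiv in *; lra.
Qed.

Lemma sum_geom_le q N : 0 <= q < 1 -> sum_f_R0 (pow q) N <= / (1 - q).
Proof.
  intros hq; rewrite tech3 by lra.
  assert (0 <= q ^ S N) by (apply pow_le; lra).
  assert (0 < / (1 - q)) by (apply Rinv_0_lt_compat; lra).
  unfold Rdiv; nra.
Qed.

Lemma sum_arith_geom_eq q N : q <> 1 ->
  sum_f_R0 (fun i => INR i * q ^ i) N =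
  (q - INR (S N) * q ^ S N + INR N * q ^ S (S N)) / ((1 - q) * (1 - q)).
Proof.
  intro hq; assert (1 - q <> 0) by lra.
  induction N as [| N IH]; cbn [sum_f_R0].
  - simpl; field; auto.
  - rewrite IH, !S_INR; cbn [pow]; field; auto.
Qed.

Lemma sum_arith_geom_le q N : 0 <= q < 1 ->
  sum_f_R0 (fun i => INR i * q ^ i) N <= q / ((1 - q) * (1 - q)).
Proof.
  intro hq; rewrite sum_arith_geom_eq by lra.
  unfold Rdiv; apply Rmult_le_compat_r; [left; apply Rinv_0_lt_compat; nra|].
  assert (0 <= q ^ N) by (apply pow_le; lra).
  assert (0 <= INR N) by apply pos_INR.
  assert (0 <= INR N * q ^ N * q * (1 - q)) by (repeat apply Rmult_le_pos; lra).
  rewrite S_INR; cbn [pow]; nra.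
Qed.

Lemma growing_bounded_limit (u : nat -> R) (B : R) :
  Un_growing u -> (forall N, u N <= B) -> exists l, Un_cv u l /\ l <= B.
Proof.
  intros hu hB.
  destruct (growing_cv u hu) as [l hl]; [exists B; intros y [N ->]; apply hB|].
  exists l; split; [exact hl|].
  destruct (Rle_or_lt l B) as [le | gt]; [exact le|].
  destruct (hl (l - B)) as [N hN]; [lra|].
  specialize (hN N (Nat.le_refl N)); specialize (hB N).
  unfold Rdist in hN; apply Rabs_def2 in hN; lra.
Qed.
From Pilot Require Import Defs.

Definition coef (b : R) : R := b / sqrt (2 * b - 1).

Section Coefficient.
Variable b : R.
Hypothesis hb : 1 <= b.

Lemma sqrt_2b_minus_1_bounds : sqrt b <= sqrt (2 * b - 1) <= b.
Proof.
  split; [apply sqrt_le_1_alt; lra|].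
  rewrite <- (sqrt_square b) at 2 by lra; apply sqrt_le_1_alt; nra.
Qed.

Lemma coef_ge1 : 1 <= coef b.
Proof.
  destruct sqrt_2b_minus_1_bounds as [lo hi].
  assert (0 < sqrt b) by (apply sqrt_lt_R0; lra).
  assert (0 < / sqrt (2 * b - 1)) by (apply Rinv_0_lt_compat; lra).
  assert (sqrt (2 * b - 1) * / sqrt (2 * b - 1) = 1) by (apply Rinv_r; lra).
  unfold coef, Rdiv; nra.
Qed.

Lemma coef_sq_le : coef b * coef b <= b.
Proof.
  assert (0 < 2 * b - 1) by lra.
  assert (e : coef b * coef b = b * b / (2 * b - 1)).
  { unfold coef; rewrite <- (sqrt_sqrt (2 * b - 1)) at 3 by lra.
    field; apply Rgt_not_eq, sqrt_lt_R0; lra. }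
  rewrite e; apply Rmult_le_reg_r with (2 * b - 1); [lra|].
  unfold Rdiv; rewrite Rmult_assoc, Rinv_l by lra; nra.
Qed.

Lemma coef_over_b_le : / b * coef b <= / sqrt b.
Proof.
  destruct sqrt_2b_minus_1_bounds as [lo hi].
  assert (0 < sqrt b) by (apply sqrt_lt_R0; lra).
  replace (/ b * coef b) with (/ sqrt (2 * b - 1)) by (unfold coef; field; lra).
  apply Rinv_le_contravar; lra.
Qed.

End Coefficient.

Definition log_factor (n i : nat) (x : R) : R :=
  / beta n ^ i * ln (1 + coef (beta n ^ i) * x).

Lemma xi_partial_exp n N x :
  xi_partial n N x = exp (sum_f_R0 (fun i => log_factor n i x) N).
Proof.
  induction N as [| N IH]; [reflexivity|].
  cbn [xi_partial sum_f_R0]; rewrite exp_plus, IH; reflexivity.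
Qed.

Lemma sqrt_pow a i : 0 <= a -> sqrt (a ^ i) = sqrt a ^ i.
Proof.
  intro ha; induction i as [| i IH]; cbn [pow]; [apply sqrt_1|].
  rewrite sqrt_mult, IH by (try apply pow_le; lra); reflexivity.
Qed.

Section Beta.
Variable n : nat.
Hypothesis hn : (3 <= n)%nat.

Lemma INR_ge3 : 3 <= INR n.
Proof. replace 3 with (INR 3) by (simpl; ring); now apply le_INR. Qed.

Lemma beta_ge1 : 1 <= beta n.
Proof.
  pose proof INR_ge3; unfold beta.
  assert (0 < / (INR n - 2)) by (apply Rinv_0_lt_compat; lra).
  assert ((INR n - 2) * / (INR n - 2) = 1) by (apply Rinv_r; lra).
  unfold Rdiv; nra.
Qed.

Lemma beta_pow_ge1 i : 1 <= beta n ^ i.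
Proof. apply pow_R1_Rle, beta_ge1. Qed.

Lemma inv_beta : / beta n = 1 - 2 / INR n.
Proof. pose proof INR_ge3; unfold beta; field; lra. Qed.

Lemma ln_beta_le : ln (beta n) <= 2 / (INR n - 2).
Proof.
  pose proof INR_ge3; pose proof beta_ge1.
  replace (2 / (INR n - 2)) with (beta n - 1) by (unfold beta; field; lra).
  apply ln_le_pred; lra.
Qed.

(* beta^(-1/2) <= 1 - 1/n, as (1 - 1/n)^2 >= 1 - 2/n = 1/beta; so the weights
   of estimate (i) sum to at most n. *)
Lemma inv_sqrt_beta_le : / sqrt (beta n) <= 1 - / INR n.
Proof.
  pose proof INR_ge3.
  assert (/ INR n <= / 3) by (apply Rinv_le_contravar; lra).
  rewrite <- sqrt_inv, inv_beta, <- (sqrt_square (1 - / INR n)) by lra.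
  apply sqrt_le_1_alt.
  assert (e : (1 - / INR n) * (1 - / INR n) = 1 - 2 / INR n + / INR n * / INR n)
    by (field; lra).
  rewrite e; assert (0 <= / INR n * / INR n) by apply Rle_0_sqr; lra.
Qed.

Lemma log_factor_nonneg i x : 0 <= x -> 0 <= log_factor n i x.
Proof.
  intro hx; pose proof (beta_pow_ge1 i) as hb; pose proof (coef_ge1 _ hb).
  apply Rmult_le_pos; [left; apply Rinv_0_lt_compat; lra|].
  apply ln_nonneg; nra.
Qed.

Lemma log_factor_le_small i x : 0 <= x ->
  log_factor n i x <= (/ sqrt (beta n)) ^ i * ln (1 + x).
Proof.
  intro hx; pose proof (beta_pow_ge1 i) as hb.
  pose proof (ln_1_plus_scaled _ x (coef_ge1 _ hb) hx).
  pose proof (coef_over_b_le _ hb).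
  assert (0 < / beta n ^ i) by (apply Rinv_0_lt_compat; lra).
  assert (0 <= ln (1 + x)) by (apply ln_nonneg; lra).
  rewrite pow_inv, <- sqrt_pow by (pose proof beta_ge1; lra).
  unfold log_factor; nra.
Qed.

Lemma log_factor_le_large i x : 1 <= x ->
  log_factor n i x <=
  (/ beta n) ^ i * (ln x + ln 2) + (INR i * (/ beta n) ^ i) * (ln (beta n) / 2).
Proof.
  intro hx; pose proof (beta_pow_ge1 i) as hb; pose proof beta_ge1.
  set (c := coef (beta n ^ i)).
  assert (hc : 1 <= c) by now apply coef_ge1.
  assert (hcc : c * c <= beta n ^ i) by now apply coef_sq_le.
  assert (ln_c : 2 * ln c <= INR i * ln (beta n)).
  { rewrite <- ln_pow by lra.
    replace (2 * ln c) with (ln (c * c)) by (rewrite ln_mult by lra; ring).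
    apply ln_le_compat; nra. }
  assert (ln_inner : ln (1 + c * x) <= ln x + ln 2 + ln c).
  { rewrite <- ln_mult, <- ln_mult by nra; apply ln_le_compat; nra. }
  assert (0 < / beta n ^ i) by (apply Rinv_0_lt_compat; lra).
  unfold log_factor; fold c; rewrite pow_inv; nra.
Qed.

Lemma log_sum_le_small N x : 0 <= x ->
  sum_f_R0 (fun i => log_factor n i x) N <= INR n * ln (1 + x).
Proof.
  intro hx; pose proof INR_ge3; pose proof inv_sqrt_beta_le.
  set (s := / sqrt (beta n)) in *.
  assert (0 <= s) by (left; apply Rinv_0_lt_compat, sqrt_lt_R0; pose proof beta_ge1; lra).
  assert (0 <= ln (1 + x)) by (apply ln_nonneg; lra).
  assert (geom : sum_f_R0 (pow s) N <= INR n).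
  { apply Rle_trans with (/ (1 - s)); [apply sum_geom_le; pose proof (Rinv_0_lt_compat (INR n)); lra|].
    rewrite <- (Rinv_inv (INR n)); apply Rinv_le_contravar; [apply Rinv_0_lt_compat|]; lra. }
  apply Rle_trans with (sum_f_R0 (fun i => s ^ i * ln (1 + x)) N).
  - apply sum_Rle; intros i _; now apply log_factor_le_small.
  - rewrite <- scal_sum; rewrite Rmult_comm; apply Rmult_le_compat_r; assumption.
Qed.

Lemma log_sum_le_large N x : 1 <= x ->
  sum_f_R0 (fun i => log_factor n i x) N <=
  INR n / 4 * ln (4 * exp 1) + INR n / 2 * ln x.
Proof.
  intro hx; pose proof INR_ge3; pose proof beta_ge1.
  set (q := / beta n).
  assert (hq : q = 1 - 2 / INR n) by apply inv_beta.
  assert (hq01 : 0 <= q < 1).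
  { split; [left; apply Rinv_0_lt_compat; lra|].
    rewrite hq; assert (0 < 2 / INR n) by (apply Rdiv_lt_0_compat; lra); lra. }
  assert (geom : sum_f_R0 (pow q) N <= INR n / 2).
  { replace (INR n / 2) with (/ (1 - q)) by (rewrite hq; field; lra).
    now apply sum_geom_le. }
  assert (arith : sum_f_R0 (fun i => INR i * q ^ i) N <= INR n * (INR n - 2) / 4).
  { replace (INR n * (INR n - 2) / 4) with (q / ((1 - q) * (1 - q))) by (rewrite hq; field; lra).
    now apply sum_arith_geom_le. }
  assert (0 <= ln x) by now apply ln_nonneg.
  assert (0 <= ln 2) by (apply ln_nonneg; lra).
  assert (0 <= ln (beta n)) by now apply ln_nonneg.
  pose proof ln_beta_le.
  assert (ln_4e : ln (4 * exp 1) = 2 * ln 2 + 1).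
  { rewrite ln_mult, ln_exp by (try apply exp_pos; lra).
    replace 4 with (2 * 2) by ring; rewrite ln_mult by lra; ring. }
  apply Rle_trans with
    (sum_f_R0 (fun i => q ^ i * (ln x + ln 2) + (INR i * q ^ i) * (ln (beta n) / 2)) N).
  { apply sum_Rle; intros i _; now apply log_factor_le_large. }
  rewrite sum_plus, <- !scal_sum, ln_4e.
  assert (h1 : (ln x + ln 2) * sum_f_R0 (pow q) N <= (ln x + ln 2) * (INR n / 2))
    by (apply Rmult_le_compat_l; lra).
  assert (h2 : ln (beta n) / 2 * sum_f_R0 (fun i => INR i * q ^ i) N
               <= (2 / (INR n - 2)) / 2 * (INR n * (INR n - 2) / 4)).
  { apply Rmult_le_compat; try lra.
    apply cond_pos_sum; intro k; apply Rmult_le_pos; [apply pos_INR | apply pow_le; lra]. }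
  replace ((2 / (INR n - 2)) / 2 * (INR n * (INR n - 2) / 4)) with (INR n / 4) in h2
    by (field; lra).
  lra.
Qed.

Lemma xi_partial_growing x : 0 <= x -> Un_growing (fun N => xi_partial n N x).
Proof.
  intros hx N; rewrite !xi_partial_exp; cbn [sum_f_R0].
  apply exp_le_compat; pose proof (log_factor_nonneg (S N) x hx); lra.
Qed.

End Beta.

Theorem lemmaB2 (n : nat) (hn : (3 <= n)%nat) :
  (forall x : R, 0 <= x ->
     exists l : R, xi_is n x l /\ l <= (1 + x) ^ n) /\
  (forall x : R, 1 <= x ->
     exists l : R, xi_is n x l /\
       l <= Rpower (4 * exp 1) (INR n / 4) * Rpower x (INR n / 2)).
Proof.
  split; intros x hx; apply growing_bounded_limit.
  - apply (xi_partial_growing n hn); lra.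
  - intro N; rewrite xi_partial_exp, <- Rpower_pow by lra; unfold Rpower.
    apply exp_le_compat; now apply log_sum_le_small.
  - apply (xi_partial_growing n hn); lra.
  - intro N; rewrite xi_partial_exp; unfold Rpower; rewrite <- exp_plus.
    apply exp_le_compat; now apply log_sum_le_large.
Qed.
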